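(* In $NOM$, writing $\phi\perp\!\!\!\perp\psi$ for $(\phi\rightarrow(\psi\rightarrow\phi))\wedge(\psi\rightarrow(\phi\rightarrow\psi))$, for every finite sequence $\Gamma$ and formulas $\phi,\psi$ the following rules are derivable: from $\Gamma\vdash\phi\perp\!\!\!\perp\psi$ infer each of $\Gamma,\phi,\psi\vdash\phi$; $\Gamma,\psi,\phi\vdash\psi$; $\Gamma\vdash\psi\perp\!\!\!\perp\phi$; $\Gamma\vdash\phi\perp\!\!\!\perp\neg\psi$; $\Gamma\vdash\neg\phi\perp\!\!\!\perp\psi$; from $\Gamma\vdash\phi\perp\!\!\!\perp\neg\psi$ infer $\Gamma\vdash\phi\perp\!\!\!\perp\psi$; from $\Gamma\vdash\neg\phi\perp\!\!\!\perp\psi$ infer $\Gamma\vdash\phi\perp\!\!\!\perp\psi$. Moreover the sequents $\Gamma\vdash\phi\perp\!\!\!\perp(\phi\rightarrow\psi)$, $\Gamma\vdash\phi\perp\!\!\!\perp(\phi\wedge\psi)$ and $\Gamma\vdash\psi\perp\!\!\!\perp(\phi\wedge\psi)$ are derivable.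
   Context: The propositional deductive system $NOM$: formulas are built from propositional letters using $\wedge$, $\rightarrow$, $\neg$. Sequents are $\phi_1,\ldots,\phi_n\vdash\psi$ ($n\ge0$) with antecedent a finite ordered sequence. With $\Gamma$ a finite possibly empty sequence of formulas and $\phi,\psi,\chi$ formulas, the rules of $NOM$ are: (assumption) $\Gamma,\phi\vdash\phi$; (cut) $\Gamma\vdash\phi$, $\Gamma,\phi\vdash\psi$ $\Rightarrow$ $\Gamma\vdash\psi$; (paste) $\Gamma\vdash\phi$, $\Gamma\vdash\psi$ $\Rightarrow$ $\Gamma,\phi\vdash\psi$; (compatible exchange) $\Gamma,\phi,\psi\vdash\phi$, $\Gamma,\phi,\psi\vdash\chi$, $\Gamma,\psi,\phi\vdash\psi$ $\Rightarrow$ $\Gamma,\psi,\phi\vdash\chi$; ($\wedge$-intro) $\Gamma\vdash\phi$, $\Gamma\vdash\psi$ $\Rightarrow$ $\Gamma\vdash\phi\wedge\psi$; ($\wedge$-elim) $\Gamma\vdash\phi\wedge\psi$ $\Rightarrow$ $\Gamma\vdash\phi$ and $\Rightarrow$ $\Gamma\vdash\psi$; ($\rightarrow$-intro) $\Gamma,\phi\vdash\psi$ $\Rightarrow$ $\Gamma\vdash\phi\rightarrow\psi$; ($\rightarrow$-elim) $\Gamma\vdash\phi\rightarrow\psi$ $\Rightarrow$ $\Gamma,\phi\vdash\psi$; (excluded middle) $\Gamma,\phi\vdash\psi$, $\Gamma,\neg\phi\vdash\psi$ $\Rightarrow$ $\Gamma\vdash\psi$; (explosion) $\Gamma\vdash\neg\phi$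 $\Rightarrow$ $\Gamma,\phi\vdash\psi$. A rule schema is derivable if in every instance its conclusion can be derived from its premises using these rules. *)

From Stdlib Require Import List.
Import ListNotations.

Inductive form : Type :=
| Var : nat -> form
| And : form -> form -> form
| Imp : form -> form -> form
| Neg : form -> form.

(* A sequent  phi_1,...,phi_n |- psi ; the antecedent is an ordered list,
   and "Gamma, phi" is Gamma ++ [phi]. *)
Definition sequent : Type := (list form * form)%type.

Inductive Der (H : list sequent) : sequent -> Prop :=
| d_prem : forall s, In s H -> Der H s
| d_assum : forall G p, Der H (G ++ [p], p)
| d_cut : forall G p q, Der H (G, p) -> Der H (G ++ [p], q) -> Der H (G, q)
| d_paste : forall G p q, Der H (G, p) -> Der H (G, q) -> Der H (G ++ [p], q)
| d_cexch : forall G p q r,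
    Der H (G ++ [p; q], p) -> Der H (G ++ [p; q], r) -> Der H (G ++ [q; p], q) ->
    Der H (G ++ [q; p], r)
| d_andI : forall G p q, Der H (G, p) -> Der H (G, q) -> Der H (G, And p q)
| d_andE1 : forall G p q, Der H (G, And p q) -> Der H (G, p)
| d_andE2 : forall G p q, Der H (G, And p q) -> Der H (G, q)
| d_impI : forall G p q, Der H (G ++ [p], q) -> Der H (G, Imp p q)
| d_impE : forall G p q, Der H (G, Imp p q) -> Der H (G ++ [p], q)
| d_em : forall G p q, Der H (G ++ [p], q) -> Der H (G ++ [Neg p], q) -> Der H (G, q)
| d_expl : forall G p q, Der H (G, Neg p) -> Der H (G ++ [p], q).

Definition derivable_rule1 (prem concl : sequent) : Prop := Der [prem] concl.

Definition derivable (s : sequent) : Prop := Der [] s.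

Definition Comp (p q : form) : form :=
  And (Imp p (Imp q p)) (Imp q (Imp p q)).

(* NOM has no weakening rule; its substitute is [weaken_neg]: from Γ ⊢ a and
   Γ, b ⊢ a infer Γ, ¬b ⊢ a.  It holds because under Γ the hypotheses ¬b and
   ¬(a ∧ b) can replace each other, and Γ, ¬(a ∧ b) ⊢ a.  Together with
   compatible exchange against inconsistent contexts and double negation this
   gives all the rules for ⊥⊥. *)

From Stdlib Require Import List.
Import ListNotations.

Section Derived.

Variable H : list sequent.

Lemma cexch_snoc G a b c :
  Der H ((G ++ [a]) ++ [b], a) -> Der H ((G ++ [a]) ++ [b], c) ->
  Der H ((G ++ [b]) ++ [a], b) -> Der H ((G ++ [b]) ++ [a], c).
Proof. rewrite <- !app_assoc; apply d_cexch. Qed.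

Definition inconsistent (G : list form) : Prop := forall X, Der H (G, X).

Lemma inconsistent_snoc G w : inconsistent G -> inconsistent (G ++ [w]).
Proof. intros HG X; apply d_paste; apply HG. Qed.

Lemma inconsistent_of_neg G a : Der H (G, Neg a) -> inconsistent (G ++ [a]).
Proof. intros Hna X; apply d_expl, Hna. Qed.

Lemma inconsistent_exch G a b :
  inconsistent ((G ++ [a]) ++ [b]) -> Der H ((G ++ [b]) ++ [a], b) ->
  inconsistent ((G ++ [b]) ++ [a]).
Proof. intros Hab Hba X; apply cexch_snoc; [apply Hab | apply Hab | exact Hba]. Qed.

Lemma der_replace_hyp G x y c :
  Der H (G ++ [y], x) -> Der H (G ++ [x], y) -> Der H (G ++ [y], c) ->
  Der H (G ++ [x], c).
Proof.
  intros Hyx Hxy Hyc.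
  apply (d_cut H _ y); [exact Hxy |].
  apply cexch_snoc.
  - apply d_paste; [exact Hyx | apply d_assum].
  - apply d_paste; [exact Hyx | exact Hyc].
  - apply d_paste; [exact Hxy | apply d_assum].
Qed.

Lemma dneg_elim G a : Der H (G ++ [Neg (Neg a)], a).
Proof.
  apply (d_em H _ a).
  - apply d_assum.
  - apply d_expl, d_assum.
Qed.

Lemma inconsistent_contra G a : inconsistent ((G ++ [a]) ++ [Neg a]).
Proof.
  intro X.
  assert (Himp : Der H (G, Imp a (Imp (Neg a) X))).
  { apply (d_em H _ (Neg a)); apply d_impI, d_impI, inconsistent_of_neg.
    - apply inconsistent_of_neg, d_assum.
    - apply d_paste; [apply dneg_elim | apply d_assum]. }
  apply d_impE, d_impE, Himp.
Qed.

Lemma dneg_intro G a : Der H (G, a) -> Der H (G, Neg (Neg a)).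
Proof.
  intro Ha.
  apply (d_cut H G a); [exact Ha |].
  apply (d_em H _ (Neg a)); [apply inconsistent_contra | apply d_assum].
Qed.

Lemma inconsistent_of_pos G a : Der H (G, a) -> inconsistent (G ++ [Neg a]).
Proof. intro Ha; apply inconsistent_of_neg, dneg_intro, Ha. Qed.

Lemma dneg_hyp G a c : Der H (G ++ [Neg (Neg a)], c) -> Der H (G ++ [a], c).
Proof.
  apply der_replace_hyp; [apply dneg_elim | apply dneg_intro, d_assum].
Qed.

Lemma inconsistent_of_refuted G x b :
  Der H (G, Neg b) -> Der H (G ++ [x], b) -> inconsistent (G ++ [x]).
Proof.
  intros Hnb Hxb X.
  apply (der_replace_hyp _ _ b); [apply d_expl, Hnb | exact Hxb | apply d_expl, Hnb].
Qed.

Lemma neg_and_of_neg_l G a b : Der H (G ++ [Neg a], Neg (And a b)).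
Proof.
  apply (d_em H _ (And a b)); [| apply d_assum].
  apply (inconsistent_of_refuted _ _ a); [apply d_assum |].
  apply (d_andE1 H _ _ b), d_assum.
Qed.

Lemma neg_and_of_neg_r G a b : Der H (G ++ [Neg b], Neg (And a b)).
Proof.
  apply (d_em H _ (And a b)); [| apply d_assum].
  apply (inconsistent_of_refuted _ _ b); [apply d_assum |].
  apply (d_andE2 H _ a), d_assum.
Qed.

Lemma weaken_neg G a b :
  Der H (G, a) -> Der H (G ++ [b], a) -> Der H (G ++ [Neg b], a).
Proof.
  intros Ha Hba.
  set (r := And a b).
  assert (Hr_nb : Der H ((G ++ [Neg r]) ++ [b], Neg r)).
  { apply (d_em H _ r); [| apply d_assum].
    apply inconsistent_exch; [| apply (d_andE2 H _ a), d_assum].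
    apply inconsistent_snoc, inconsistent_of_neg, d_assum. }
  assert (Hr_b : inconsistent ((G ++ [Neg r]) ++ [b])).
  { apply inconsistent_exch; [| exact Hr_nb].
    apply inconsistent_of_pos, d_andI; [exact Hba | apply d_assum]. }
  assert (Hr_a : Der H (G ++ [Neg r], a)).
  { apply (d_em H _ a); [apply d_assum |].
    apply inconsistent_exch; [| apply neg_and_of_neg_l].
    apply inconsistent_snoc, inconsistent_of_pos, Ha. }
  apply (der_replace_hyp _ _ (Neg r)); [| apply neg_and_of_neg_r | exact Hr_a].
  apply (d_em H _ b); [apply Hr_b | apply d_assum].
Qed.

Lemma comp_fst G a b : Der H (G, Comp a b) -> Der H ((G ++ [a]) ++ [b], a).
Proof. intro Hc; apply d_impE, d_impE, (d_andE1 H _ _ _ Hc). Qed.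

Lemma comp_snd G a b : Der H (G, Comp a b) -> Der H ((G ++ [b]) ++ [a], b).
Proof. intro Hc; apply d_impE, d_impE, (d_andE2 H _ _ _ Hc). Qed.

Lemma comp_intro G a b :
  Der H ((G ++ [a]) ++ [b], a) -> Der H ((G ++ [b]) ++ [a], b) -> Der H (G, Comp a b).
Proof. intros H1 H2; apply d_andI; apply d_impI, d_impI; assumption. Qed.

Lemma comp_sym G a b : Der H (G, Comp a b) -> Der H (G, Comp b a).
Proof. intro Hc; apply comp_intro; [apply comp_snd | apply comp_fst]; exact Hc. Qed.

Lemma comp_neg_r G a b : Der H (G, Comp a b) -> Der H (G, Comp a (Neg b)).
Proof.
  intro Hc.
  apply comp_intro; [apply weaken_neg; [apply d_assum | apply comp_fst, Hc] |].
  assert (Hb_fst : Der H (G ++ [b], Imp a (Imp b a))).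
  { apply d_impI, d_impI, d_paste; [apply comp_snd, Hc | apply d_assum]. }
  assert (Hnb_fst : Der H (((G ++ [Neg b]) ++ [a]) ++ [b], a)).
  { apply d_impE, d_impE, weaken_neg; [apply (d_andE1 H _ _ _ Hc) | exact Hb_fst]. }
  apply (d_em H _ b); [| apply d_assum].
  apply inconsistent_exch; [| exact Hnb_fst].
  apply inconsistent_snoc, inconsistent_of_neg, d_assum.
Qed.

Lemma comp_dneg_r G a b : Der H (G, Comp a (Neg (Neg b))) -> Der H (G, Comp a b).
Proof.
  intro Hc.
  apply comp_intro; [apply dneg_hyp, comp_fst, Hc |].
  assert (Hb_a : Der H ((G ++ [b]) ++ [a], Neg (Neg b))).
  { apply d_impE, dneg_hyp, d_impI, comp_snd, Hc. }
  apply (d_cut H _ _ _ Hb_a), dneg_elim.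
Qed.

Lemma comp_neg_l G a b : Der H (G, Comp a b) -> Der H (G, Comp (Neg a) b).
Proof. intro Hc; apply comp_sym, comp_neg_r, comp_sym, Hc. Qed.

Lemma comp_of_neg_r G a b : Der H (G, Comp a (Neg b)) -> Der H (G, Comp a b).
Proof. intro Hc; apply comp_dneg_r, comp_neg_r, Hc. Qed.

Lemma comp_of_neg_l G a b : Der H (G, Comp (Neg a) b) -> Der H (G, Comp a b).
Proof. intro Hc; apply comp_sym, comp_of_neg_r, comp_sym, Hc. Qed.

Lemma neg_imp_elim G a b : Der H (G ++ [Neg (Imp a b)], a).
Proof.
  apply (d_em H _ a); [apply d_assum |].
  apply (inconsistent_of_refuted _ _ (Imp a b)); [apply d_assum |].
  apply d_impI, d_expl, d_assum.
Qed.

Lemma comp_imp G a b : Der H (G, Comp a (Imp a b)).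
Proof.
  apply comp_intro.
  - apply dneg_hyp, weaken_neg; [apply d_assum | apply neg_imp_elim].
  - apply d_impI, d_paste; [apply d_assum | apply d_impE, d_assum].
Qed.

Lemma comp_and_l G a b : Der H (G, Comp a (And a b)).
Proof.
  apply comp_intro.
  - apply (d_andE1 H _ _ b), d_assum.
  - apply d_paste; [apply (d_andE1 H _ _ b), d_assum | apply d_assum].
Qed.

Lemma comp_and_r G a b : Der H (G, Comp b (And a b)).
Proof.
  apply comp_intro.
  - apply (d_andE2 H _ a), d_assum.
  - apply d_paste; [apply (d_andE2 H _ a), d_assum | apply d_assum].
Qed.

End Derived.

Theorem proposition4p8 : forall (G : list form) (p q : form),
  derivable_rule1 (G, Comp p q) (G ++ [p; q], p) /\
  derivable_rule1 (G, Comp p q) (G ++ [q; p], q) /\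
  derivable_rule1 (G, Comp p q) (G, Comp q p) /\
  derivable_rule1 (G, Comp p q) (G, Comp p (Neg q)) /\
  derivable_rule1 (G, Comp p q) (G, Comp (Neg p) q) /\
  derivable_rule1 (G, Comp p (Neg q)) (G, Comp p q) /\
  derivable_rule1 (G, Comp (Neg p) q) (G, Comp p q) /\
  derivable (G, Comp p (Imp p q)) /\
  derivable (G, Comp p (And p q)) /\
  derivable (G, Comp q (And p q)).
Proof.
  intros G p q; unfold derivable_rule1, derivable.
  assert (Prem : forall c, Der [(G, c)] (G, c)) by (intro c; apply d_prem; left; reflexivity).
  assert (Hfst := comp_fst _ _ _ _ (Prem (Comp p q))).
  assert (Hsnd := comp_snd _ _ _ _ (Prem (Comp p q))).
  rewrite <- app_assoc in Hfst, Hsnd.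
  repeat split.
  - exact Hfst.
  - exact Hsnd.
  - apply comp_sym, Prem.
  - apply comp_neg_r, Prem.
  - apply comp_neg_l, Prem.
  - apply comp_of_neg_r, Prem.
  - apply comp_of_neg_l, Prem.
  - apply comp_imp.
  - apply comp_and_l.
  - apply comp_and_r.
Qed.
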